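(* Let $q$ be a prime power, $m\ge 1$, and let $1\le k\le n-1$ be integers. Let $\bar{\mathbb{F}}_{q^m}$ denote the algebraic closure of $\mathbb{F}_{q^m}$. Then the set $$S_{\mathrm{MRD}} := \{X \in \bar{\mathbb{F}}_{q^m}^{k\times (n-k)} \mid \det([\,I_k \mid X\,]\, A)\neq 0 \text{ for all } A \in \mathbb{F}_q^{n\times k} \text{ of rank } k\}$$ is a generic subset of $\bar{\mathbb{F}}_{q^m}^{k\times (n-k)}$.
   Context: We identify $\bar{\mathbb{F}}_{q^m}^{k\times(n-k)}$ with $\bar{\mathbb{F}}_{q}^{r}$, $r=k(n-k)$, by treating the entries of $X$ as coordinates $x_1,\dots,x_r$. The Zariski topology on $\bar{\mathbb{F}}_q^r$ is the topology whose closed sets are the algebraic sets $V(S)=\{\boldsymbol x\in\bar{\mathbb{F}}_q^r \mid f(\boldsymbol x)=0 \ \forall f\in S\}$ for subsets $S\subseteq \mathbb{F}_q[x_1,\dots,x_r]$; Zariski-open sets are their complements. A subset of $\bar{\mathbb{F}}_q^r$ is called generic if it contains a non-empty Zariski-open set. $I_k$ is the $k\times k$ identity matrix. *)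

From HB Require Import structures.
From mathcomp Require Import all_boot all_order all_algebra all_field.
From mathcomp Require Import mpoly.
Set Implicit Arguments. Unset Strict Implicit. Unset Printing Implicit Defensive.
Import GRing.Theory.
Local Open Scope ring_scope.

Definition peval (F K : fieldType) (phi : {rmorphism F -> K}) (r : nat)
  (p : {mpoly F[r]}) (x : 'I_r -> K) : K := (map_mpoly phi p).@[x].

Definition zariski_V (F K : fieldType) (phi : {rmorphism F -> K}) (r : nat)
  (S : {mpoly F[r]} -> Prop) : ('I_r -> K) -> Prop :=
  fun x => forall p, S p -> peval phi p x = 0.

Definition zariski_open (F K : fieldType) (phi : {rmorphism F -> K}) (r : nat)
  (U : ('I_r -> K) -> Prop) : Prop :=
  exists S : {mpoly F[r]} -> Prop, forall x, U x <-> ~ zariski_V phi S x.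

Definition generic (F K : fieldType) (phi : {rmorphism F -> K}) (r : nat)
  (T : ('I_r -> K) -> Prop) : Prop :=
  exists U, zariski_open phi U /\ (exists x, U x) /\ (forall x, U x -> T x).

(* Identification of K^{k x (n-k)} with K^r, r = k(n-k): entries as coordinates. *)
Definition coords_to_mx (K : Type) (k l : nat) (x : 'I_(k * l) -> K) : 'M[K]_(k, l) :=
  vec_mx (\row_i x i).

(* S_MRD: matrices X with det([I_k | X] A) <> 0 for all A in F_q^{n x k} of rank k.
   Here n = k + l (l = n - k), and A is mapped into K entrywise by phi. *)
Definition S_MRD (F K : fieldType) (phi : {rmorphism F -> K}) (k l : nat)
  (X : 'M[K]_(k, l)) : Prop :=
  forall A : 'M[F]_(k + l, k), \rank A = k ->
    \det (row_mx 1%:M X *m map_mx phi A) != 0.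

Definition algebraic_over (L K : fieldType) (g : {rmorphism L -> K}) : Prop :=
  forall x : K, exists2 p : {poly L}, p != 0 & root (map_poly g p) x.

From HB Require Import structures.
From mathcomp Require Import all_boot all_order all_algebra all_field.
From mathcomp Require Import mpoly.
Import GRing.Theory.
Local Open Scope ring_scope.
Set Implicit Arguments. Unset Strict Implicit. Unset Printing Implicit Defensive.

(* For a fixed full-rank A over F_q, det([I_k | X] A) is a polynomial in the
   entries of X with coefficients in F_q; it is not identically zero, since a
   left inverse S = [S1 S2] of A (S1 T + S2 B = 1, with T, B the top and bottom
   blocks of A) gives, for X = (1 + t S1)^-1 t S2, the identity
   (1 + t S1)(T + X B) = T + t, nonsingular for all but finitely many t.
   There are only finitely many such A, so the product of these determinants is
   a nonzero polynomial over F_q, and S_MRD contains the Zariski-open set where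
   it does not vanish; that set is nonempty because K is algebraically closed. *)

Local Notation widen := (widen_ord (leqnSn _)).

Lemma lift_max_widen n (i : 'I_n) : lift ord_max i = widen i.
Proof. exact/val_inj/lift_max. Qed.

Lemma meval_muni (R : comNzRingType) n (p : {mpoly R[n.+1]}) (v : 'I_n.+1 -> R) :
  p.@[v] = (map_poly (meval (v \o widen)) (muni p)).[v ord_max].
Proof.
rewrite mevalE muniE raddf_sum horner_sum; apply: eq_bigr => m _ /=.
rewrite map_polyZ map_polyXn hornerZ hornerXn /= mevalZ mevalX big_ord_recr /=.
by rewrite mulrA; congr (_ * _ * _); apply: eq_bigr => i _; rewrite mnmE.
Qed.

Lemma muni_eq0 (R : nzRingType) n (p : {mpoly R[n.+1]}) : (muni p == 0) = (p == 0).
Proof.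
apply/eqP/eqP => [p0|->]; last exact: raddf0.
apply/mpolyP => m; rewrite mcoeff0.
have eq_mnm_split m0 : (m0 == m) = (m0 ord_max == m ord_max) &&
    ([multinom m0 (widen i) | i < n] == [multinom m (widen i) | i < n]).
  apply/eqP/andP => [-> //|[/eqP eq_max /eqP/mnmP eq_widen]].
  apply/mnmP => i; case: (unliftP ord_max i) => [j ->|-> //].
  by have := eq_widen j; rewrite !mnmE lift_max_widen.
have <- : ((muni p)`_(m ord_max))@_[multinom m (widen i) | i < n] = 0.
  by rewrite p0 coef0 mcoeff0.
rewrite muniE coef_sum raddf_sum /= {1}(mpolyE p) raddf_sum /=.
apply: eq_bigr => m0 _; rewrite coefZ coefXn mcoeffZ mcoeffX eq_mnm_split [m ord_max == _]eq_sym.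
case: (m0 ord_max =P m ord_max) => _ /=; rewrite ?mulr1 ?mulr0 ?mcoeffZ ?mcoeffX ?mcoeff0 //.
Qed.

Lemma mpoly_nonvanishing (K : closedFieldType) n (p : {mpoly K[n]}) :
  p != 0 -> exists v, p.@[v] != 0.
Proof.
elim: n p => [|n IHn] p p_neq0.
  have pC : p = (p@_0%MM)%:MP.
    by apply/mpolyP => m; rewrite mcoeffC (_ : m = 0%MM) ?eqxx ?mulr1 //; apply/mnmP => -[].
  by exists (fun=> 0); rewrite pC mevalC -(mpolyC_eq0 0) -pC.
have [w w_lc] : exists w, (lead_coef (muni p)).@[w] != 0.
  by apply: IHn; rewrite lead_coef_eq0 muni_eq0.
pose P := map_poly (meval w) (muni p).
have P_neq0 : P != 0 by rewrite map_poly_eq0_id0 // muni_eq0.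
have [t Pt] := closed_nonrootP P P_neq0.
exists (fun i => if unlift ord_max i is Some j then w j else t).
rewrite meval_muni unlift_none /P; congr (~~ root _ _): Pt.
apply: eq_map_poly => c; apply: meval_eq => i /=.
by rewrite -lift_max_widen liftK.
Qed.

Lemma horner_det_pencil (R : comNzRingType) k (M0 M1 : 'M[R]_k) (t : R) :
  (\det (map_mx polyC M0 + 'X *: map_mx polyC M1)).[t] = \det (M0 + t *: M1).
Proof.
rewrite -[LHS]/(horner_eval t _) -det_map_mx; congr (\det _).
by apply/matrixP => i j; rewrite !mxE rmorphD rmorphM /= !horner_evalE hornerX !hornerC.
Qed.

Lemma row_full_exists_det_neq0 (K : closedFieldType) k l (A : 'M[K]_(k + l, k)) :
  row_full A -> exists X : 'M_(k, l), \det (row_mx 1%:M X *m A) != 0.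
Proof.
move=> /row_fullP[S SA1].
set T := usubmx A; set B := dsubmx A; set S1 := lsubmx S; set S2 := rsubmx S.
have S_TB : S1 *m T + S2 *m B = 1%:M by rewrite -mul_row_col hsubmxK vsubmxK.
pose p1 := \det (map_mx polyC 1%:M + 'X *: map_mx polyC S1).
pose p2 := \det (map_mx polyC T + 'X *: map_mx polyC 1%:M).
have p1_neq0 : p1 != 0.
  apply/eqP => p1_0; have := horner_det_pencil 1%:M S1 0.
  by rewrite -/p1 p1_0 horner0 scale0r addr0 det1 => /eqP; rewrite eq_sym oner_eq0.
have p2_neq0 : p2 != 0.
  have -> : p2 = char_poly (- T).
    by rewrite /p2 /char_poly /char_poly_mx map_mx1 scalemx1 map_mxN opprK addrC.
  exact: monic_neq0 (char_poly_monic _).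
have [t] := closed_nonrootP _ (mulf_neq0 p1_neq0 p2_neq0).
rewrite /root hornerM mulf_eq0 negb_or !horner_det_pencil => /andP[G1_det T_det].
have G1_unit : 1%:M + t *: S1 \in unitmx by rewrite unitmxE unitfE.
exists (invmx (1%:M + t *: S1) *m (t *: S2)).
rewrite -[A]vsubmxK mul_row_col mul1mx -/T -/B.
have G1_mul : (1%:M + t *: S1) *m (T + invmx (1%:M + t *: S1) *m (t *: S2) *m B) = T + t *: 1%:M.
  rewrite mulmxDr !mulmxA mulmxV // mul1mx mulmxDl mul1mx -!scalemxAl -addrA -scalerDr.
  by rewrite S_TB.
by apply: contra T_det => /eqP det0; rewrite -G1_mul det_mulmx det0 mulr0.
Qed.

Section ZariskiGeneric.
Variables (F K : fieldType) (phi : {rmorphism F -> K}).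

Lemma zariski_open_nonvanishing r (p : {mpoly F[r]}) :
  zariski_open phi (fun x => peval phi p x != 0).
Proof.
exists (eq^~ p) => x; split => [/eqP px /(_ p erefl) //|px].
by apply/eqP => p0; apply: px => _ ->.
Qed.

Lemma generic_nonvanishing r (p : {mpoly F[r]}) (T : ('I_r -> K) -> Prop) :
  (exists x, peval phi p x != 0) -> (forall x, peval phi p x != 0 -> T x) ->
  generic phi T.
Proof.
move=> p_nonvanishing p_T; exists (fun x => peval phi p x != 0).
by split; last split; [exact: zariski_open_nonvanishing|exact: p_nonvanishing|exact: p_T].
Qed.

End ZariskiGeneric.

Lemma coords_to_mx_mxvec (R : Type) k l (X : 'M[R]_(k, l)) :
  coords_to_mx (fun i => mxvec X 0 i) = X.
Proof. by rewrite /coords_to_mx -[RHS]mxvecK; congr vec_mx; apply/rowP => i; rewrite mxE. Qed.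

Section MRDPolynomial.
Variables (F : finFieldType) (k l : nat).

Definition generic_mx : 'M[{mpoly F[k * l]}]_(k, l) := vec_mx (\row_i 'X_i).

Definition mrd_det (A : 'M[F]_(k + l, k)) : {mpoly F[k * l]} :=
  \det (row_mx 1%:M generic_mx *m map_mx (@mpolyC _ F) A).

Definition mrd_poly : {mpoly F[k * l]} :=
  \prod_(A : 'M[F]_(k + l, k) | \rank A == k) mrd_det A.

Variables (K : fieldType) (phi : {rmorphism F -> K}).

Lemma peval_mrd_det x A :
  peval phi (mrd_det A) x = \det (row_mx 1%:M (coords_to_mx x) *m map_mx phi A).
Proof.
pose ev : {rmorphism {mpoly F[k * l]} -> K} := meval x \o map_mpoly phi.
rewrite -[LHS]/(ev (mrd_det A)) -det_map_mx map_mxM map_row_mx map_mx1 -map_mx_comp.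
congr (\det (row_mx _ _ *m _)).
  rewrite map_vec_mx; congr vec_mx.
  by apply/rowP => i; rewrite !mxE /ev /= map_mpolyX mevalXU.
by apply: eq_map_mx => c; rewrite /ev /= map_mpolyC mevalC.
Qed.

Lemma peval_mrd_poly x :
  peval phi mrd_poly x =
  \prod_(A : 'M[F]_(k + l, k) | \rank A == k)
     \det (row_mx 1%:M (coords_to_mx x) *m map_mx phi A).
Proof.
pose ev : {rmorphism {mpoly F[k * l]} -> K} := meval x \o map_mpoly phi.
by rewrite -[LHS]/(ev mrd_poly) rmorph_prod; apply: eq_bigr => A _; apply: peval_mrd_det.
Qed.

End MRDPolynomial.

Lemma mrd_poly_nonvanishing (F : finFieldType) (K : closedFieldType)
    (phi : {rmorphism F -> K}) k l :
  exists x, peval phi (mrd_poly F k l) x != 0.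
Proof.
apply: mpoly_nonvanishing; rewrite rmorph_prod; apply/prodf_neq0 => A /eqP rankA.
have [X detX] : exists X : 'M_(k, l), \det (row_mx 1%:M X *m map_mx phi A) != 0.
  by apply: row_full_exists_det_neq0; rewrite /row_full mxrank_map rankA.
apply: contraNneq detX => mrd_det0.
by rewrite -[X]coords_to_mx_mxvec -peval_mrd_det /peval mrd_det0 meval0.
Qed.

Lemma S_MRD_generic (F : finFieldType) (K : closedFieldType) (phi : {rmorphism F -> K}) k l :
  generic phi (fun x : 'I_(k * l) -> K => S_MRD phi (coords_to_mx x)).
Proof.
apply: (generic_nonvanishing (mrd_poly_nonvanishing phi k l)) => x.
by rewrite peval_mrd_poly => /prodf_neq0 dets_neq0 A /eqP; apply: dets_neq0.
Qed.

Theorem theorem3p1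
  (q m n k : nat) (Fq Fqm : finFieldType) (K : closedFieldType)
  (f : {rmorphism Fq -> Fqm}) (g : {rmorphism Fqm -> K})
  (hq : exists p e, prime p /\ q = (p ^ e.+1)%N)
  (hFq : #|Fq| = q) (hm : (1 <= m)%N) (hFqm : #|Fqm| = (q ^ m)%N)
  (hK : algebraic_over g)
  (hk : (1 <= k)%N) (hkn : (k <= n - 1)%N) :
  generic (g \o f : {rmorphism Fq -> K})
    (fun x : 'I_(k * (n - k)) -> K =>
       S_MRD (g \o f : {rmorphism Fq -> K}) (coords_to_mx x)).
Proof.
exact: S_MRD_generic.
Qed.
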